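(* Let $k\ge 0$ be an integer and define the sequence $(G_n)_{n\ge 0}$ by $G_0=k$, $G_1=1$, and $G_n=G_{n-1}+G_{n-2}$ for $n\ge 2$. Then for every integer $m\ge 0$, $$[\underbrace{4,4,\dots,4}_{m},\,2k+3]=\frac{G_{3m+4}}{G_{3m+1}},$$ where the continued fraction has $m+1$ entries $a_0,\dots,a_m$ with $a_i=4$ for $0\le i<m$ and $a_m=2k+3$.
   Context: For numbers $a_0,a_1,\dots,a_m$, the finite simple continued fraction $[a_0,a_1,\dots,a_m]$ denotes $a_0+\cfrac{1}{a_1+\cfrac{1}{\ddots+\cfrac{1}{a_m}}}$, evaluated as a rational number; $[a_0]=a_0$. *)

From mathcomp Require Import all_boot all_order all_algebra.
Set Implicit Arguments. Unset Strict Implicit. Unset Printing Implicit Defensive.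
Import Order.TTheory GRing.Theory Num.Theory.
Local Open Scope ring_scope.

Fixpoint cfrac (s : seq rat) : rat :=
  match s with
  | [::] => 0
  | [:: a] => a
  | a :: t => a + (cfrac t)^-1
  end.

Fixpoint Gseq (k : nat) (n : nat) : nat :=
  match n with
  | 0 => k
  | 1 => 1
  | (n'.+1 as m).+1 => Gseq k m + Gseq k n'
  end.

(* Any sequence x with x(i+2) = a x(i+1) + x(i) has x(m+1)/x(m) = a + x(m-1)/x(m),
   so unfolding m times gives [a, ..., a, x(1)/x(0)] = x(m+1)/x(m).  Every third
   term of a Fibonacci-type sequence obeys such a recurrence with a = 4, since
   G(n+6) = 4 G(n+3) + G(n); apply this to x(i) = G(3i+1), with x(0) = 1 and
   x(1) = G(4) = 2k+3. *)

From mathcomp Require Import all_boot all_order all_algebra.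
From mathcomp Require Import zify.
Import GRing.Theory Num.Theory.
Local Open Scope ring_scope.

Lemma cfrac_cons (a : rat) s : s != [::] -> cfrac (a :: s) = a + (cfrac s)^-1.
Proof. by case: s. Qed.

Lemma cfrac_nseq_rcons (a : rat) (x : nat -> rat) m :
  (forall n, x n.+2 = a * x n.+1 + x n) -> (forall n, x n.+1 != 0) ->
  cfrac (rcons (nseq m a) (x 1%N / x 0%N)) = x m.+1 / x m.
Proof.
move=> x_rec x_neq0; elim: m => [//|m IHm].
rewrite [rcons _ _]/= cfrac_cons; last by case: m {IHm}.
by rewrite IHm invf_div x_rec mulrDl mulfK.
Qed.

Lemma Gseq_gt0 k n : (0 < Gseq k n.+1)%N.
Proof. by elim: n => [//|n IHn] /=; rewrite ltn_addr. Qed.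

Lemma Gseq_addn6 k n : Gseq k (n + 6) = (4 * Gseq k (n + 3) + Gseq k n)%N.
Proof. rewrite !addnS addn0 /=; lia. Qed.

Lemma Gseq4 k : Gseq k 4 = (2 * k + 3)%N.
Proof. by rewrite /=; lia. Qed.

Theorem theorem1 (k m : nat) :
  cfrac (rcons (nseq m 4%:R) (2 * k + 3)%N%:R) =
  (Gseq k (3 * m + 4))%:R / (Gseq k (3 * m + 1))%:R.
Proof.
pose x n : rat := (Gseq k (3 * n + 1))%:R.
have x_rec n : x n.+2 = 4%:R * x n.+1 + x n.
  rewrite /x.
  have -> : (3 * n.+2 + 1 = 3 * n + 1 + 6)%N by lia.
  have -> : (3 * n.+1 + 1 = 3 * n + 1 + 3)%N by lia.
  by rewrite Gseq_addn6 natrD natrM.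
have x_neq0 n : x n.+1 != 0 by rewrite pnatr_eq0 -lt0n addn1 Gseq_gt0.
have := cfrac_nseq_rcons _ _ m x_rec x_neq0.
have -> : x 1%N = (2 * k + 3)%N%:R by rewrite /x -Gseq4.
have -> : x 0%N = 1 by [].
rewrite divr1 => ->.
by rewrite /x (_ : 3 * m.+1 + 1 = 3 * m + 4)%N //; lia.
Qed.
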